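(* (1) For every plane poset $P$, $\Delta_0(P)=\sum_{P_1P_2=P}P_1\otimes P_2$, the sum running over pairs of plane posets $(P_1,P_2)$ (possibly empty) with $P_1P_2=P$. (2) For any plane posets $P,Q$, $\langle P,Q\rangle_0\neq 0$ if and only if there exists $n\in\mathbb{N}$ such that $P=Q=\bullet^n$, where $\bullet^n$ is the plane poset with $n$ elements, no two of them $\leq_h$-comparable. Consequently, the kernel of the pairing $\langle-,-\rangle_0$ is the subspace spanned by the plane posets not of the form $\bullet^n$, which is a two-sided ideal of $(\mathcal{H}_{\mathcal{PP}},m)$.
   Context: A plane poset is a finite set with two partial orders $\leq_h,\leq_r$ such that two distinct elements are $\leq_h$-comparable iff they are not $\leq_r$-comparable, considered up to isomorphism; $\mathcal{H}_{\mathcal{PP}}$ is the vector space over a field $K$ with basis these classes. $PQ$ (product $m$) is the plane poset on $P\sqcup Q$ with $P,Q$ plane subposets, no $\leq_h$-comparability between $P$ and $Q$, and $x<_r y$ for $x\in P,y\in Q$. A biideal of $P$ is a subset $I$ with $x\in I$ and ($x\leq_h y$ or $x\leq_r y$) implying $y\in I$. $\Delta_0(P)=\sum_{I\text{ biideal of }P}0^{h(P\setminus I,I)}(P\setminus I)\otimes I$ where $h(A,B)=\sharp\{(x,y)\in A\times B\mid x<_h y\}$ and $0^0=1$. On a plane poset, $x\leq y$ iff ($x\leq_h y$ or $x\leq_r y$) is a total order (known fact); for $P,Q$ of equal cardinality $\theta_{P,Q}$ is the increasing bijection $P\to Q$, and $P\leq Q$ means: $\theta_{P,Q}(x)\leq_h\theta_{P,Q}(y)$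 in $Q$ implies $x\leq_h y$ in $P$. $\iota(P)=(P,\leq_r,\leq_h)$. $\langle P,Q\rangle_0=0^{\phi(P,Q)}$ (with $0^0=1$) if $\iota(P)\leq Q$ and $0$ otherwise, where $\phi(P,Q)=\sharp\{(x,y)\in P^2\mid x<_r y,\ \theta_{P,Q}(x)<_h\theta_{P,Q}(y)\}+\sharp\{(x,y)\in P^2\mid x<_h y,\ \theta_{P,Q}(x)<_r\theta_{P,Q}(y)\}$. *)

From HB Require Import structures.
From mathcomp Require Import all_boot all_order all_algebra.
Set Implicit Arguments. Unset Strict Implicit. Unset Printing Implicit Defensive.
Import GRing.Theory.

Record pdata := PData { car : finType; hle : rel car; rle : rel car }.
Arguments hle : clear implicits.
Arguments rle : clear implicits.

Definition partial_order (T : Type) (R : rel T) : Prop :=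
  [/\ reflexive R, antisymmetric R & transitive R].

Definition plane (P : pdata) : Prop :=
  [/\ partial_order (hle P), partial_order (rle P) &
      forall x y : car P, x != y ->
        (hle P x y || hle P y x) = ~~ (rle P x y || rle P y x)].

(* Isomorphism of plane posets (a bijection preserving and reflecting both
   orders); on finite types, injective + equal cardinality = bijective. *)
Definition pp_iso (P Q : pdata) : bool :=
  [exists f : {ffun car P -> car Q},
     [&& injectiveb f, #|car P| == #|car Q| &
        [forall x, forall y, (hle Q (f x) (f y) == hle P x y)
                          && (rle Q (f x) (f y) == rle P x y)]]].

Definition pprod (P Q : pdata) : pdata :=
  @PData (car P + car Q)%type
    (fun a b => match a, b with
                | inl x, inl y => hle P x y
                | inr x, inr y => hle Q x y
                | _, _ => false end)
    (fun a b => match a, b with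
                | inl x, inl y => rle P x y
                | inr x, inr y => rle Q x y
                | inl _, inr _ => true
                | inr _, inl _ => false end).

Definition psub (P : pdata) (S : {set car P}) : pdata :=
  @PData {x : car P | x \in S}
    (fun x y => hle P (val x) (val y)) (fun x y => rle P (val x) (val y)).

Definition biideal (P : pdata) (I : {set car P}) : bool :=
  [forall x, forall y, (x \in I) && (hle P x y || rle P x y) ==> (y \in I)].

Definition hcount (P : pdata) (A B : {set car P}) : nat :=
  #|[set xy : car P * car P |
      [&& xy.1 \in A, xy.2 \in B, xy.1 != xy.2 & hle P xy.1 xy.2]]|.

(* Coefficient of the basis tensor [A] (x) [B] in
   Delta_0(P) = sum_{I biideal} 0^{h(P\I,I)} (P\I) (x) I. *)
Definition Delta0_coef (K : fieldType) (P A B : pdata) : K :=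
  \sum_(I : {set car P} |
          [&& biideal I, pp_iso (psub (~: I)) A & pp_iso (psub I) B])
     ((0 : K) ^+ hcount (~: I) I)%R.

Definition tle (P : pdata) : rel (car P) := fun x y => hle P x y || rle P x y.
Arguments tle : clear implicits.

Definition incr_bij (P Q : pdata) (f : {ffun car P -> car Q}) : bool :=
  [&& injectiveb f, #|car P| == #|car Q| &
     [forall x, forall y, tle P x y == tle Q (f (x : car P)) (f y)]].

Definition theta (P Q : pdata) : option {ffun car P -> car Q} :=
  [pick f : {ffun car P -> car Q} | incr_bij f].

(* iota(P) <= Q along f: f x <=_h f y in Q implies x <=_h y in iota(P),
   i.e. x <=_r y in P.  (iota(P) has the same total order as P, so
   theta_{iota(P),Q} = theta_{P,Q}.) *)
Definition iota_le (P Q : pdata) (f : {ffun car P -> car Q}) : bool :=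
  [forall x, forall y, hle Q (f x) (f y) ==> rle P x y].

Definition phi (P Q : pdata) (f : {ffun car P -> car Q}) : nat :=
  #|[set xy : car P * car P |
      [&& xy.1 != xy.2, rle P xy.1 xy.2, f xy.1 != f xy.2 & hle Q (f xy.1) (f xy.2)]]|
  + #|[set xy : car P * car P |
      [&& xy.1 != xy.2, hle P xy.1 xy.2, f xy.1 != f xy.2 & rle Q (f xy.1) (f xy.2)]]|.

Definition pair0 (K : fieldType) (P Q : pdata) : K :=
  match theta P Q with
  | Some f => if iota_le f then ((0 : K) ^+ phi f)%R else 0%R
  | None => 0%R
  end.

(* bullet^n : n elements, no two distinct ones <=_h-comparable
   (so <=_r is a total order, here the natural one). *)
Definition dots (n : nat) : pdata :=
  @PData 'I_n (fun x y => x == y) (fun x y => (x <= y)%N).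

Fixpoint all_plane (K : Type) (s : seq (K * pdata)) : Prop :=
  match s with
  | [::] => True
  | cp :: s' => plane cp.2 /\ all_plane s'
  end.

(* (1) A biideal [I] of a plane poset [P] contributes to [Delta_0(P)] only if no
   element outside [I] is [<_h] an element of [I]; as distinct elements are
   comparable for exactly one of the two orders, everything outside [I] is then
   [<_r] everything in [I], i.e. [P = (P\I) I].  Conversely a factorization
   [P = P1 P2] yields such a biideal.  Biideals of a plane poset are nested,
   hence determined by their cardinality, so at most one term contributes.
   (2) [theta_{P,Q}] sends [<=_h] of [Q] to [<=_r] of [P] when [iota(P) <= Q],
   and exchanges no pair of orders when [phi = 0]; this forces both [P] and [Q]
   to have no [<_h] pair, i.e. to be [bullet^n].  Hence [<P,Q>_0] is the
   indicator of [P = Q = bullet^n], which gives the kernels, and a product has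
   no [<_h] pair only if both factors have none, which gives the ideal. *)

From mathcomp Require Import all_boot all_order all_algebra.
Import GRing.Theory.
Set Implicit Arguments. Unset Strict Implicit.

Definition iso (P Q : pdata) : Prop :=
  exists f : car P -> car Q, [/\ bijective f,
    forall x y, hle Q (f x) (f y) = hle P x y &
    forall x y, rle Q (f x) (f y) = rle P x y].

Lemma pp_isoP (P Q : pdata) : reflect (iso P Q) (pp_iso P Q).
Proof.
apply: (iffP existsP) => [[f /and3P[/injectiveP f_inj /eqP cardPQ /forallP f_ord]]|].
  exists f; split=> [|x y|x y]; first by apply: inj_card_bij f_inj _; rewrite cardPQ.
  - by have /forallP/(_ y)/andP[/eqP -> _] := f_ord x.
  - by have /forallP/(_ y)/andP[_ /eqP ->] := f_ord x.
move=> [f [f_bij f_hle f_rle]]; exists [ffun x => f x]; apply/and3P; split.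
- by apply/injectiveP=> x y; rewrite !ffunE; apply: bij_inj.
- by rewrite (bij_eq_card f_bij).
- by apply/forallP=> x; apply/forallP=> y; rewrite !ffunE f_hle f_rle !eqxx.
Qed.

Lemma iso_sym (P Q : pdata) : iso P Q -> iso Q P.
Proof.
move=> [f [[g fK gK] f_hle f_rle]]; exists g; split=> [|x y|x y].
- by exists f.
- by rewrite -f_hle !gK.
- by rewrite -f_rle !gK.
Qed.

Lemma iso_trans (P Q R : pdata) : iso P Q -> iso Q R -> iso P R.
Proof.
move=> [f [f_bij f_hle f_rle]] [g [g_bij g_hle g_rle]]; exists (g \o f).
split=> [|x y|x y] /=; [exact: bij_comp | by rewrite g_hle | by rewrite g_rle].
Qed.

Lemma iso_card (P Q : pdata) : pp_iso P Q -> #|car P| = #|car Q|.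
Proof. by move=> /pp_isoP[f [f_bij _ _]]; exact: bij_eq_card f_bij. Qed.

Lemma card_psub (P : pdata) (S : {set car P}) : #|car (psub S)| = #|S|.
Proof. by rewrite card_sig; apply: eq_card => x; rewrite inE. Qed.

Lemma inj_surj_bij (T T' : finType) (f : T -> T') :
  injective f -> (forall y, exists x, f x = y) -> bijective f.
Proof.
move=> f_inj f_surj; apply: inj_card_bij f_inj _.
apply: leq_trans (leq_image_card f T); apply: subset_leq_card.
by apply/subsetP=> y _; have [x <-] := f_surj y; apply: image_f.
Qed.

Lemma iso_psub (A P : pdata) (S : {set car P}) (f : car A -> car P) :
  injective f -> (forall a, f a \in S) -> (forall x, x \in S -> exists a, f a = x) ->
  (forall a b, hle P (f a) (f b) = hle A a b) ->
  (forall a b, rle P (f a) (f b) = rle A a b) -> iso A (psub S).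
Proof.
move=> f_inj fS f_onto f_hle f_rle.
exists (fun a => exist (fun x => x \in S) (f a) (fS a) : car (psub S)).
split=> [|a b|a b]; [apply: inj_surj_bij | exact: f_hle | exact: f_rle].
  by move=> a b /(congr1 val) /f_inj.
by move=> [x xS]; have [a fa] := f_onto x xS; exists a; apply: val_inj.
Qed.

Lemma iso_pprod (A A' B B' : pdata) :
  iso A A' -> iso B B' -> iso (pprod A B) (pprod A' B').
Proof.
move=> [f [[f' fK f'K] f_hle f_rle]] [g [[g' gK g'K] g_hle g_rle]].
exists (fun z => match z with inl a => inl (f a) | inr b => inr (g b) end).
split=> [|[a|b] [a'|b']|[a|b] [a'|b']] //=.
exists (fun z => match z with inl a => inl (f' a) | inr b => inr (g' b) end).
  by case=> [a|b]; rewrite /= ?fK ?gK.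
by case=> [a|b]; rewrite /= ?f'K ?g'K.
Qed.

(** * Biideals and the coproduct [Delta_0] *)

Lemma biidealP (P : pdata) (I : {set car P}) :
  biideal I -> forall x y, x \in I -> hle P x y || rle P x y -> y \in I.
Proof.
by move=> /forallP I_bi x y xI xy; apply: (implyP (forallP (I_bi x) y)); rewrite xI.
Qed.

Lemma hcount_eq0P (P : pdata) (A B : {set car P}) :
  reflect (forall x y, x \in A -> y \in B -> x != y -> ~~ hle P x y)
          (hcount A B == 0%N).
Proof.
rewrite cards_eq0; apply: (iffP eqP) => [AB0 x y xA yB xy|noh].
  by apply/negP=> hxy; have := AB0; move/setP/(_ (x, y)); rewrite !inE xA yB xy hxy.
apply/setP=> [[x y]]; rewrite !inE /=; apply/negbTE/and4P=> [[xA yB xy]].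
exact/negP/noh.
Qed.

Lemma plane_comparable (P : pdata) : plane P -> forall x y : car P, x != y ->
  [|| hle P x y, hle P y x, rle P x y | rle P y x].
Proof.
move=> [_ _ P_cmp] x y /P_cmp.
by case: (hle P x y); case: (hle P y x); case: (rle P x y); case: (rle P y x).
Qed.

Lemma biideal_total (P : pdata) (I J : {set car P}) : plane P ->
  biideal I -> biideal J -> (I \subset J) || (J \subset I).
Proof.
move=> P_pl I_bi J_bi; apply/orP.
case: (boolP (I \subset J)) => [|/subsetPn[x xI xJ]]; first by left.
right; apply/subsetP=> y yJ; apply/negPn/negP=> yI.
have xy : x != y by apply: contraNneq yI => <-.
case/or4P: (plane_comparable P_pl xy) => xy_ord.
- by move: yI; rewrite (biidealP I_bi xI) // xy_ord.
- by move: xJ; rewrite (biidealP J_bi yJ) // xy_ord.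
- by move: yI; rewrite (biidealP I_bi xI) // xy_ord orbT.
- by move: xJ; rewrite (biidealP J_bi yJ) // xy_ord orbT.
Qed.

Lemma biideal_card_inj (P : pdata) (I J : {set car P}) : plane P ->
  biideal I -> biideal J -> #|I| = #|J| -> I = J.
Proof.
move=> P_pl I_bi J_bi cardIJ; apply/eqP.
case/orP: (biideal_total P_pl I_bi J_bi) => sub.
  by rewrite eqEcard sub cardIJ leqnn.
by rewrite eq_sym eqEcard sub cardIJ leqnn.
Qed.

Lemma biideal_cut (P : pdata) (I : {set car P}) : plane P -> biideal I ->
  hcount (~: I) I = 0%N -> forall x y, x \notin I -> y \in I ->
  [/\ hle P x y = false, rle P x y, hle P y x = false & rle P y x = false].
Proof.
move=> P_pl I_bi /eqP/hcount_eq0P noh x y xI yI.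
have xy : x != y by apply: contraNneq xI => ->.
have hxy : hle P x y = false by apply/negbTE/noh; rewrite ?inE.
have y_above z : hle P y z || rle P y z -> z \in I := biidealP I_bi yI.
have hyx : hle P y x = false by apply: contraNF xI => h; apply: y_above; rewrite h.
have ryx : rle P y x = false by apply: contraNF xI => r; apply: y_above; rewrite r orbT.
by have := plane_comparable P_pl xy; rewrite hxy hyx ryx !orbF.
Qed.

Lemma biideal_cut_iso (P : pdata) (I : {set car P}) : plane P -> biideal I ->
  hcount (~: I) I = 0%N -> iso (pprod (psub (~: I)) (psub I)) P.
Proof.
move=> P_pl I_bi hI.
have lowP (x : car (psub (~: I))) : val x \notin I by rewrite -in_setC (valP x).
have cut x (y : car (psub I)) := biideal_cut P_pl I_bi hI (lowP x) (valP y).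
exists (fun z => match z with inl x => val x | inr y => val y end).
split=> [|[x|y] [x'|y']|[x|y] [x'|y']] //=;
  try by [case: (cut x y') | case: (cut x' y)].
apply: inj_surj_bij.
  move=> [x|y] [x'|y'] /= eq_val; try by congr (_ _); apply: val_inj.
  - by case/negP: (lowP x); rewrite [val x]eq_val (valP y').
  - by case/negP: (lowP x'); rewrite -[val x']eq_val (valP y).
move=> z; case: (boolP (z \in I)) => zI.
  by exists (inr (exist _ z zI)).
have zI' : z \in ~: I by rewrite inE.
by exists (inl (exist _ z zI')).
Qed.

Lemma pprod_biideal (P A B : pdata) : pp_iso (pprod A B) P ->
  exists I : {set car P}, [/\ biideal I, pp_iso (psub (~: I)) A,
                              pp_iso (psub I) B & hcount (~: I) I = 0%N].
Proof.
move=> /pp_isoP[f [[g fK gK] f_hle f_rle]].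
have g_hle x y : hle P x y = hle (pprod A B) (g x) (g y) by rewrite -f_hle !gK.
have g_rle x y : rle P x y = rle (pprod A B) (g x) (g y) by rewrite -f_rle !gK.
pose I := [set x | if g x is inr _ then true else false].
exists I; split.
- apply/forallP=> x; apply/forallP=> y; rewrite !inE g_hle g_rle.
  by case: (g x) => [a|b]; case: (g y) => [a'|b'] /=; rewrite ?implybT.
- apply/pp_isoP/iso_sym; apply: (@iso_psub _ _ _ (f \o inl)) => //=.
  + by move=> a a' /(can_inj fK) [].
  + by move=> a; rewrite !inE fK.
  + by move=> x; rewrite !inE; case E: (g x) => [a|] // _; exists a; rewrite -E gK.
- apply/pp_isoP/iso_sym; apply: (@iso_psub _ _ _ (f \o inr)) => //=.
  + by move=> b b' /(can_inj fK) [].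
  + by move=> b; rewrite !inE fK.
  + by move=> x; rewrite !inE; case E: (g x) => [|b] // _; exists b; rewrite -E gK.
- apply/eqP/hcount_eq0P=> x y; rewrite !inE g_hle.
  by case: (g x) => [a|b]; case: (g y) => [a'|b'] /=.
Qed.

Lemma biideal_pprod (P A B : pdata) (I : {set car P}) : plane P -> biideal I ->
  pp_iso (psub (~: I)) A -> pp_iso (psub I) B -> hcount (~: I) I = 0%N ->
  pp_iso (pprod A B) P.
Proof.
move=> P_pl I_bi /pp_isoP/iso_sym isoA /pp_isoP/iso_sym isoB hI; apply/pp_isoP.
exact: iso_trans (iso_pprod isoA isoB) (biideal_cut_iso P_pl I_bi hI).
Qed.

Lemma Delta0_coefE (K : fieldType) (P A B : pdata) : plane P ->
  Delta0_coef K P A B = ((pp_iso (pprod A B) P)%:R)%R.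
Proof.
move=> P_pl; rewrite /Delta0_coef.
set cut := fun I : {set car P} =>
  [&& biideal I, pp_iso (psub (~: I)) A & pp_iso (psub I) B].
have cut_uniq I J : cut I -> cut J -> I = J.
  move=> /and3P[I_bi _ IB] /and3P[J_bi _ JB]; apply: biideal_card_inj => //.
  by rewrite -!card_psub (iso_card IB) (iso_card JB).
have [ABP|nABP] := boolP (pp_iso (pprod A B) P).
  have [I [I_bi IA IB hI]] := pprod_biideal ABP.
  have I_cut : cut I by rewrite /cut I_bi IA IB.
  rewrite (bigD1 I) //= hI expr0 big1 ?addr0 // => J /andP[J_cut JI].
  by rewrite (cut_uniq _ _ J_cut I_cut) eqxx in JI.
rewrite big1 // => I /and3P[I_bi IA IB]; rewrite expr0n.
by case: eqP => // hI; rewrite (biideal_pprod P_pl I_bi IA IB hI) in nABP.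
Qed.

(** * The plane posets [bullet^n] *)

Definition hfree (P : pdata) : bool :=
  [forall x, forall y, hle P x y ==> (x == y)].

Lemma hfreeP (P : pdata) : reflect (forall x y, hle P x y -> x = y) (hfree P).
Proof.
apply: (iffP forallP) => [P_hf x y hxy|P_hf x].
  by apply/eqP; apply: (implyP (forallP (P_hf x) y)).
by apply/forallP=> y; apply/implyP=> /P_hf ->.
Qed.

Lemma hfree_pprod (P Q : pdata) : hfree (pprod P Q) = hfree P && hfree Q.
Proof.
apply/hfreeP/andP=> [PQ_hf|[/hfreeP P_hf /hfreeP Q_hf]].
  split; apply/hfreeP=> x y hxy.
    by case: (PQ_hf (inl x) (inl y) hxy).
  by case: (PQ_hf (inr x) (inr y) hxy).
by case=> [x|x] [y|y] //= hxy; [rewrite (P_hf _ _ hxy) | rewrite (Q_hf _ _ hxy)].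
Qed.

Lemma dots_plane n : plane (dots n).
Proof.
split.
- by split=> [x|x y /andP[/eqP]|x y z /eqP ->] /=.
- split=> [x|x y|x y z] /=; [exact: leqnn | | exact: leq_trans].
  by rewrite -eqn_leq => /eqP/val_inj.
- move=> x y /= xy; rewrite (negbTE xy) eq_sym (negbTE xy) /=.
  by case: (leqP x y) => // /ltnW ->.
Qed.

Lemma dots_hfree n : hfree (dots n).
Proof. by apply/hfreeP=> x y /eqP. Qed.

Lemma iso_dots_hfree (P : pdata) n : pp_iso P (dots n) -> hfree P.
Proof.
move=> /pp_isoP[f [f_bij f_hle _]]; apply/hfreeP=> x y hxy.
by apply: (bij_inj f_bij); apply/eqP; rewrite -[_ == _]/(hle (dots n) _ _) f_hle.
Qed.

Section HfreeIsDots.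

Variable P : pdata.
Hypotheses (P_pl : plane P) (P_hf : hfree P).

Lemma hfree_rle_total (x y : car P) : x != y -> rle P x y || rle P y x.
Proof.
move=> xy; have := plane_comparable P_pl xy.
have nh u v : u != v -> hle P u v = false.
  by move=> uv; apply: contraNF uv => /(hfreeP _ P_hf) ->.
by rewrite !nh // eq_sym.
Qed.

Definition rpred (x : car P) : {set car P} := [set y | rle P y x & y != x].

Lemma card_rpred_lt x : #|rpred x| < #|car P|.
Proof.
rewrite -cardsT; apply/proper_card/properP; split; first exact: subsetT.
by exists x; rewrite ?inE ?eqxx ?andbF.
Qed.

Definition rrank (x : car P) : 'I_#|car P| := Ordinal (card_rpred_lt x).

Lemma rrank_lt x y : x != y -> rle P x y -> rrank x < rrank y.
Proof.
have [_ [_ r_anti r_trans] _] := P_pl.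
move=> xy rxy; apply/proper_card/properP; split.
  apply/subsetP=> z; rewrite !inE => /andP[rzx zx]; rewrite (r_trans _ _ _ rzx rxy) /=.
  by apply: contraNneq zx => zy; subst z; apply/eqP/r_anti; rewrite rzx rxy.
by exists x; rewrite !inE ?eqxx ?andbF // rxy xy.
Qed.

Lemma rrank_inj : injective rrank.
Proof.
move=> x y eq_rk; apply/eqP/negPn/negP=> xy.
case/orP: (hfree_rle_total xy) => [rxy|ryx].
  by have := rrank_lt xy rxy; rewrite eq_rk ltnn.
by rewrite eq_sym in xy; have := rrank_lt xy ryx; rewrite eq_rk ltnn.
Qed.

Lemma hfree_iso_dots : iso P (dots #|car P|).
Proof.
have [[h_refl _ _] [r_refl _ _] _] := P_pl.
exists rrank; split=> [|x y|x y] /=.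
- by apply: inj_card_bij rrank_inj _; rewrite card_ord.
- rewrite (inj_eq rrank_inj); have [->|xy] := eqVneq x y; first by rewrite h_refl.
  by apply/esym/negbTE; apply: contraNN xy => /(hfreeP _ P_hf) ->.
- have [->|xy] := eqVneq x y; first by rewrite r_refl leqnn.
  case: (boolP (rle P x y)) => [rxy|nrxy]; first exact/ltnW/rrank_lt.
  have ryx : rle P y x by move: (hfree_rle_total xy); rewrite (negbTE nrxy).
  by rewrite leqNgt rrank_lt // eq_sym.
Qed.

End HfreeIsDots.

Lemma iso_dotsE (P : pdata) n : plane P -> pp_iso P (dots n) = hfree P && (#|car P| == n).
Proof.
move=> P_pl; apply/idP/andP=> [P_dots|[P_hf /eqP <-]].
  by rewrite (iso_card P_dots) card_ord (iso_dots_hfree P_dots).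
exact/pp_isoP/hfree_iso_dots.
Qed.

(** * The pairing [<-,->_0] *)

Local Open Scope ring_scope.

Section IncreasingBijection.

Variables (P Q : pdata) (f : {ffun car P -> car Q}).
Hypotheses (P_pl : plane P) (f_incr : incr_bij f).

Lemma incr_bij_inj : injective f.
Proof. by have /and3P[/injectiveP] := f_incr. Qed.

Lemma incr_bij_bij : bijective f.
Proof.
have /and3P[_ /eqP cardPQ _] := f_incr.
by apply: inj_card_bij incr_bij_inj _; rewrite cardPQ.
Qed.

Lemma incr_bij_tle x y : tle P x y = tle Q (f x) (f y).
Proof. by have /and3P[_ _ /forallP/(_ x)/forallP/(_ y)/eqP] := f_incr. Qed.

Lemma phi_eq0 :
  (phi f = 0)%N <->
  (forall x y, x != y -> rle P x y -> ~~ hle Q (f x) (f y)) /\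
  (forall x y, x != y -> hle P x y -> ~~ rle Q (f x) (f y)).
Proof.
rewrite /phi; split=> [/eqP|[rh hr]].
  rewrite addn_eq0 !cards_eq0 => /andP[/eqP/setP rh0 /eqP/setP hr0].
  split=> x y xy xy_ord; apply/negP=> fxy_ord.
    by have := rh0 (x, y); rewrite !inE /= (inj_eq incr_bij_inj) xy xy_ord fxy_ord.
  by have := hr0 (x, y); rewrite !inE /= (inj_eq incr_bij_inj) xy xy_ord fxy_ord.
apply/eqP; rewrite addn_eq0 !cards_eq0; apply/andP.
split; apply/eqP/setP=> [[x y]]; rewrite !inE /=;
  apply/negbTE/and4P=> [[xy xy_ord _]]; apply/negP.
  exact: rh.
exact: hr.
Qed.

Lemma hfree_iota_le : hfree Q -> iota_le f.
Proof.
have [_ [r_refl _ _] _] := P_pl.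
move=> /hfreeP Q_hf; apply/forallP=> x; apply/forallP=> y; apply/implyP.
by move=> /Q_hf/incr_bij_inj ->; apply: r_refl.
Qed.

Lemma hfree_phi0 : hfree P -> hfree Q -> phi f = 0%N.
Proof.
move=> /hfreeP P_hf /hfreeP Q_hf; apply/phi_eq0; split=> x y xy xy_ord.
  by apply: contra_neqN xy => /Q_hf/incr_bij_inj.
by case/eqP: xy; apply: P_hf.
Qed.

Lemma iota_le_phi0_hfree : iota_le f -> phi f = 0%N -> hfree P && hfree Q.
Proof.
move=> /forallP f_iota /phi_eq0[rh hr].
have f_rle x y : hle Q (f x) (f y) -> rle P x y.
  by move: (forallP (f_iota x) y) => /implyP.
have [_ _ P_cmp] := P_pl.
apply/andP; split; apply/hfreeP.
  move=> x y hxy; apply/eqP/negPn/negP=> xy.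
  have /orP[fhxy|frxy] : tle Q (f x) (f y) by rewrite -incr_bij_tle /tle hxy.
    by move: (P_cmp x y xy); rewrite hxy f_rle.
  by case/negP: (hr x y xy hxy).
have [g fK gK] := incr_bij_bij.
move=> u v huv; apply/eqP/negPn/negP=> uv.
have gxy : g u != g v by apply: contra_neq uv => /(can_inj gK).
have fg_hle : hle Q (f (g u)) (f (g v)) by rewrite !gK.
by case/negP: (rh _ _ gxy (f_rle _ _ fg_hle)).
Qed.

End IncreasingBijection.

Lemma iso_incr_bij (P Q : pdata) :
  iso P Q -> exists f : {ffun car P -> car Q}, incr_bij f.
Proof.
move=> /pp_isoP/existsP[f /and3P[f_inj cardPQ /forallP f_ord]].
exists f; rewrite /incr_bij f_inj cardPQ; apply/forallP=> x; apply/forallP=> y.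
by rewrite /tle; have /forallP/(_ y)/andP[/eqP -> /eqP ->] := f_ord x.
Qed.

Lemma pair0E (K : fieldType) (P Q : pdata) : plane P -> plane Q ->
  pair0 K P Q = (hfree P && hfree Q && (#|car P| == #|car Q|))%:R.
Proof.
move=> P_pl Q_pl; rewrite /pair0 /theta; case: pickP => [f f_incr|no_incr].
  have /and3P[_ /eqP -> _] := f_incr; rewrite eqxx andbT.
  have [/andP[P_hf Q_hf]|not_hf] := boolP (hfree P && hfree Q).
    by rewrite hfree_iota_le // hfree_phi0 // expr0.
  case: ifP => // f_iota; rewrite expr0n; case: eqP => // phi0.
  by rewrite (iota_le_phi0_hfree P_pl f_incr f_iota phi0) in not_hf.
apply/esym; have [/andP[/andP[P_hf Q_hf] /eqP cardPQ]|//] := boolP (_ && _).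
have PQ : iso P Q.
  apply: iso_trans (hfree_iso_dots P_pl P_hf) _; rewrite cardPQ.
  exact/iso_sym/hfree_iso_dots.
by have [f f_incr] := iso_incr_bij PQ; rewrite no_incr in f_incr.
Qed.

Lemma pair0_dots (K : fieldType) (P Q : pdata) : plane P -> plane Q ->
  pair0 K P Q = (hfree Q && pp_iso P (dots #|car Q|))%:R.
Proof. by move=> P_pl Q_pl; rewrite pair0E // iso_dotsE // andbCA andbA. Qed.

Lemma pair0C (K : fieldType) (P Q : pdata) : plane P -> plane Q ->
  pair0 K P Q = pair0 K Q P.
Proof. by move=> P_pl Q_pl; rewrite !pair0E // [hfree Q && _]andbC eq_sym. Qed.

Lemma pair0_neq0_dots (K : fieldType) (P Q : pdata) : plane P -> plane Q ->
  pair0 K P Q != 0 <-> exists n, pp_iso P (dots n) && pp_iso Q (dots n).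
Proof.
move=> P_pl Q_pl; rewrite pair0E //; split.
  case: (boolP (_ && _)) => [/andP[/andP[P_hf Q_hf] /eqP cardPQ] _|_]; last by rewrite eqxx.
  by exists #|car Q|; rewrite !iso_dotsE // P_hf Q_hf cardPQ eqxx.
case=> n /andP[]; rewrite !iso_dotsE // => /andP[-> /eqP ->] /andP[-> /eqP ->].
by rewrite eqxx oner_eq0.
Qed.

Lemma eq_big_all_plane (R : Type) (idx : R) (op : R -> R -> R) (K : Type)
    (s : seq (K * pdata)) (F G : K * pdata -> R) :
  all_plane s -> (forall cp, plane cp.2 -> F cp = G cp) ->
  \big[op/idx]_(cp <- s) F cp = \big[op/idx]_(cp <- s) G cp.
Proof.
move=> + FG; elim: s => [|cp s IHs] /=; first by rewrite !big_nil.
by case=> cp_pl s_pl; rewrite !big_cons FG // IHs.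
Qed.

Lemma sum_pair0 (K : fieldType) (s : seq (K * pdata)) (Q : pdata) :
  all_plane s -> plane Q ->
  \sum_(cp <- s) cp.1 * pair0 K cp.2 Q =
  if hfree Q then \sum_(cp <- s | pp_iso cp.2 (dots #|car Q|)) cp.1 else 0.
Proof.
move=> s_pl Q_pl.
pose G (cp : K * pdata) := cp.1 * (hfree Q && pp_iso cp.2 (dots #|car Q|))%:R.
rewrite (eq_big_all_plane _ _ (G := G) s_pl);
  last by move=> cp cp_pl; rewrite pair0_dots.
rewrite {}/G.
case: ifP => Q_hf /=; last by rewrite big1 // => cp _; rewrite mulr0.
by rewrite [RHS]big_mkcond; apply: eq_bigr => cp _; case: ifP; rewrite ?mulr1 ?mulr0.
Qed.

Lemma left_kernel_pair0 (K : fieldType) (s : seq (K * pdata)) : all_plane s ->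
  (forall Q, plane Q -> \sum_(cp <- s) cp.1 * pair0 K cp.2 Q = 0) <->
  (forall n, \sum_(cp <- s | pp_iso cp.2 (dots n)) cp.1 = 0).
Proof.
move=> s_pl; split=> [s_ker n|s_dots Q Q_pl].
  have := s_ker _ (dots_plane n).
  by rewrite (sum_pair0 s_pl (dots_plane n)) dots_hfree card_ord.
by rewrite sum_pair0 //; case: ifP.
Qed.

Lemma right_kernel_pair0 (K : fieldType) (s : seq (K * pdata)) : all_plane s ->
  (forall Q, plane Q -> \sum_(cp <- s) cp.1 * pair0 K Q cp.2 = 0) <->
  (forall n, \sum_(cp <- s | pp_iso cp.2 (dots n)) cp.1 = 0).
Proof.
move=> s_pl; apply: iff_trans (left_kernel_pair0 s_pl).
split=> s_ker Q Q_pl; rewrite -[RHS](s_ker Q Q_pl).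
  by apply: (eq_big_all_plane _ _ s_pl) => cp cp_pl; rewrite pair0C.
by apply: (eq_big_all_plane _ _ s_pl) => cp cp_pl; rewrite pair0C.
Qed.

Lemma hfree_pprod_dots (P Q : pdata) : plane P -> (forall n, ~~ pp_iso P (dots n)) ->
  forall n, ~~ pp_iso (pprod P Q) (dots n) /\ ~~ pp_iso (pprod Q P) (dots n).
Proof.
move=> P_pl P_ndots n.
have P_nhf : ~~ hfree P.
  by apply: contra (P_ndots #|car P|) => P_hf; rewrite iso_dotsE // P_hf eqxx.
by split; apply/negP=> /iso_dots_hfree; rewrite hfree_pprod (negbTE P_nhf) ?andbF.
Qed.

Theorem proposition25 (K : fieldType) :
  (forall P A B : pdata, plane P -> plane A -> plane B ->
     Delta0_coef K P A B = (pp_iso (pprod A B) P)%:R)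
  /\
  (forall P Q : pdata, plane P -> plane Q ->
     (pair0 K P Q != 0 <-> exists n, pp_iso P (dots n) && pp_iso Q (dots n)))
  /\
  (forall s : seq (K * pdata), all_plane s ->
     ((forall Q : pdata, plane Q ->
         \sum_(cp <- s) cp.1 * pair0 K cp.2 Q = 0)
       <-> (forall n, \sum_(cp <- s | pp_iso cp.2 (dots n)) cp.1 = 0))
     /\
     ((forall Q : pdata, plane Q ->
         \sum_(cp <- s) cp.1 * pair0 K Q cp.2 = 0)
       <-> (forall n, \sum_(cp <- s | pp_iso cp.2 (dots n)) cp.1 = 0)))
  /\
  (forall P Q : pdata, plane P -> plane Q ->
     (forall n, ~~ pp_iso P (dots n)) ->
     (forall n, ~~ pp_iso (pprod P Q) (dots n)) /\
     (forall n, ~~ pp_iso (pprod Q P) (dots n))).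
Proof.
split; first by move=> P A B P_pl _ _; apply: Delta0_coefE.
split; first exact: pair0_neq0_dots.
split.
  by move=> s s_pl; split; [apply: left_kernel_pair0 | apply: right_kernel_pair0].
move=> P Q P_pl _ P_ndots.
by split=> n; have [] := hfree_pprod_dots Q P_pl P_ndots n.
Qed.
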